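(* For every integer $n\geq 6$, $$\dot{\imath}_{[1,2]}(P_6\Box P_n)=\begin{cases}\left\lfloor \frac{10n+17}{7}\right\rfloor & \text{if } n\equiv 0 \text{ or } 3 \pmod 7 \text{ and } n\neq 7,\\[2pt] \left\lfloor \frac{10n+10}{7}\right\rfloor & \text{otherwise.}\end{cases}$$
   Context: $P_k$ denotes the path on $k$ vertices and $P_m\Box P_n$ the Cartesian product of two paths (the $m\times n$ grid graph). A set $S$ of vertices of a graph $G$ is independent if no two vertices of $S$ are adjacent, and dominating if every vertex not in $S$ has at least one neighbor in $S$. An independent $[1,2]$-set of $G$ is an independent dominating set $S$ such that every vertex $v\in V(G)\setminus S$ has at least one and at most two neighbors in $S$. When $G$ has an independent $[1,2]$-set, $\dot{\imath}_{[1,2]}(G)$ denotes the minimum cardinality of an independent $[1,2]$-set of $G$ (the statement includes the existence of such a set). *)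

From mathcomp Require Import all_boot.
Set Implicit Arguments. Unset Strict Implicit. Unset Printing Implicit Defensive.

Definition path_adj (k : nat) (i j : 'I_k) : bool :=
  (i.+1 == j :> nat) || (j.+1 == i :> nat).

Definition grid_adj (m n : nat) (u v : 'I_m * 'I_n) : bool :=
  ((u.1 == v.1) && path_adj u.2 v.2) || ((u.2 == v.2) && path_adj u.1 v.1).

Definition independent (T : finType) (e : rel T) (S : {set T}) : bool :=
  [forall x in S, forall y in S, ~~ e x y].

Definition nbrs_in (T : finType) (e : rel T) (S : {set T}) (v : T) : nat :=
  #|[set u in S | e v u]|.

Definition indep12 (T : finType) (e : rel T) (S : {set T}) : bool :=
  independent e S &&
  [forall v in ~: S, (1 <= nbrs_in e S v) && (nbrs_in e S v <= 2)].

Definition is_i12_number (T : finType) (e : rel T) (k : nat) : Prop :=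
  (exists S : {set T}, indep12 e S /\ #|S| = k) /\
  (forall S : {set T}, indep12 e S -> k <= #|S|).

From mathcomp Require Import all_boot zify.
Set Implicit Arguments. Unset Strict Implicit. Unset Printing Implicit Defensive.

(** Read column by column, a vertex set of the m x n grid is a word of columns (bit lists of
    length m), and it is an independent [1,2]-set exactly when every three consecutive columns
    of the word, framed by two empty columns, satisfy a local condition at each row.

    Lower bound: for six rows there are 64 columns, and the least weight of a valid prefix of
    length k ending in a given pair of columns is computed by dynamic programming. The computed
    tables are certificates, not trusted: it is checked that every valid transition from table k
    lands in table k+1 without lowering the bound, and that table 16 is dominated by table 9 plus
    10. Hence the bound extends to all lengths with period 7 and increment 10, as the formula does.

    Upper bound: a 14-column block of weight 20 can be spliced into suitable base words of
    lengths 8 to 21 at a recurring pair of columns; lengths 6 and 7 are given directly. *)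

(** * Vertex sets of grids as words of columns *)

Definition col := seq bool.

Definition weight (c : col) : nat := count id c.

Definition blank (m : nat) : col := nseq m false.

Definition above (b : col) (i : nat) : bool := if i is i'.+1 then nth false b i' else false.

Definition window_nbrs (a b d : col) (i : nat) : nat :=
  above b i + nth false b i.+1 + nth false a i + nth false d i.

Definition row_ok (a b d : col) (i : nat) : bool :=
  if nth false b i then window_nbrs a b d i == 0
  else 0 < window_nbrs a b d i <= 2.

Definition window_ok (m : nat) (a b d : col) : bool := all (row_ok a b d) (iota 0 m).

Fixpoint windows_ok (m : nat) (w : seq col) : bool :=
  if w is a :: ((b :: d :: _) as w') then window_ok m a b d && windows_ok m w' else true.

Lemma weight_mkseq (f : nat -> bool) k : weight (mkseq f k) = \sum_(i < k) f i.
Proof. by rewrite /weight count_map -sumn_count sumnE big_map -{1}(subn0 k) big_mkord. Qed.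

Definition pad (m : nat) (w : seq col) : seq col := blank m :: w ++ [:: blank m].

Lemma windows_ok_cons m a w : windows_ok m (a :: w) =
  (if w is b :: d :: _ then window_ok m a b d else true) && windows_ok m w.
Proof. by case: w => [|b [|d w]]. Qed.

Lemma windows_ok_nth m x0 w i : windows_ok m w -> i.+2 < size w ->
  window_ok m (nth x0 w i) (nth x0 w i.+1) (nth x0 w i.+2).
Proof.
elim: w i => [|a w IH] // [|i]; rewrite windows_ok_cons => /andP [ha hw] hi; last exact: IH.
by case: w ha hi {IH hw} => [|b [|d w]].
Qed.

Lemma windows_ok_cat m p x y q : windows_ok m (p ++ [:: x; y] ++ q) =
  windows_ok m (p ++ [:: x; y]) && windows_ok m ([:: x; y] ++ q).
Proof.
elim: p => [|a p IH] //.
rewrite cat_cons windows_ok_cons IH cat_cons windows_ok_cons andbA.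
by case: p {IH} => [|b [|d p]].
Qed.

Lemma independentE (T : finType) (e : rel T) (S : {set T}) :
  independent e S = [forall v in S, nbrs_in e S v == 0].
Proof.
apply/forall_inP/forall_inP => h x xS.
  rewrite /nbrs_in cards_eq0; apply/eqP/setP => y; rewrite !inE.
  by case: (boolP (y \in S)) => // /(forall_inP (h x xS)) /negbTE.
apply/forall_inP => y yS; apply/negP => exy.
by have := h x xS; rewrite /nbrs_in cards_eq0 => /eqP/setP/(_ y); rewrite !inE yS exy.
Qed.

Lemma indep12E (T : finType) (e : rel T) (S : {set T}) : indep12 e S =
  [forall v, if v \in S then nbrs_in e S v == 0 else 0 < nbrs_in e S v <= 2].
Proof.
rewrite /indep12 independentE; apply/andP/forallP => [[/forall_inP h0 /forall_inP h12] v|h].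
  by case: ifP => vS; [apply: h0 | apply: h12; rewrite inE vS].
split; apply/forall_inP => v; rewrite ?inE => vS; move: (h v); first by rewrite vS.
by rewrite (negbTE vS).
Qed.

Lemma sum_indicator_unique (T : finType) (P : pred T) :
  (forall x y, P x -> P y -> x = y) -> \sum_x (P x : nat) = [exists x, P x].
Proof.
move=> uniqP; case: (pickP P) => [x Px | P0].
  have -> : [exists x, P x] by apply/existsP; exists x.
  rewrite (bigD1 x) //= big1 ?addn0 ?Px => // y yx.
  by case Py: (P y); rewrite // (uniqP _ _ Px Py) eqxx in yx.
rewrite big1 => [|y _]; last by rewrite P0.
suff -> : [exists x, P x] = false by [].
by apply/negbTE/existsP => -[x]; rewrite P0.
Qed.

Section GridColumns.
Variables m n : nat.
Implicit Type S : {set 'I_m * 'I_n}.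

(* Padded coordinates: the grid occupies rows [1..m] and columns [1..n], surrounded by an empty
   border, so that the boundary needs no special case in the local condition. *)
Definition in_padded S (r c : nat) : bool :=
  [exists u in S, (u.1.+1 == r) && (u.2.+1 == c)].

Definition column S (c : nat) : col := mkseq (fun i => in_padded S i.+1 c) m.

Lemma in_padded_out S r c :
  (r == 0) || (m < r) || (c == 0) || (n < c) -> in_padded S r c = false.
Proof.
move=> h; apply/negbTE/existsP => -[u /and3P [_ /eqP h1 /eqP h2]].
by move: h (ltn_ord u.1) (ltn_ord u.2); rewrite -h1 -h2; lia.
Qed.

Lemma in_padded_ord S (i : 'I_m) (j : 'I_n) : in_padded S i.+1 j.+1 = ((i, j) \in S).
Proof.
apply/existsP/idP => [[[i' j'] /and3P [hu /eqP /succn_inj h1 /eqP /succn_inj h2]]|h].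
  by rewrite -(ord_inj h1) -(ord_inj h2).
by exists (i, j); rewrite h /= !eqxx.
Qed.

Lemma nth_column S r c : nth false (column S c) r = in_padded S r.+1 c.
Proof.
case: (ltnP r m) => hr; first by rewrite nth_mkseq.
by rewrite nth_default ?size_mkseq // in_padded_out //; apply/orP; left; lia.
Qed.

Lemma above_column S r c : above (column S c) r = in_padded S r c.
Proof. by case: r => [|r] /=; rewrite ?nth_column // in_padded_out. Qed.

Lemma column_out S c : (c == 0) || (n < c) -> column S c = blank m.
Proof.
move=> hc; apply: (@eq_from_nth _ false); rewrite ?size_mkseq ?size_nseq // => r hr.
by rewrite nth_column nth_nseq hr in_padded_out //; move: hc; lia.
Qed.

Lemma sum_in_padded S r c :
  \sum_u ((u \in S) && ((u.1.+1 == r) && (u.2.+1 == c)) : nat) = in_padded S r c.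
Proof.
apply: sum_indicator_unique => -[a b] [a' b'] /= /and3P [_ /eqP <- /eqP <-].
by case/and3P=> _ /eqP /succn_inj/ord_inj -> /eqP /succn_inj/ord_inj ->.
Qed.

Lemma grid_adj_split (v u : 'I_m * 'I_n) :
  (@grid_adj m n v u : nat) =
    ((u.1.+1 == v.1) && (u.2.+1 == v.2.+1) : nat)
  + ((u.1.+1 == v.1.+2) && (u.2.+1 == v.2.+1) : nat)
  + ((u.1.+1 == v.1.+1) && (u.2.+1 == v.2) : nat)
  + ((u.1.+1 == v.1.+1) && (u.2.+1 == v.2.+2) : nat).
Proof.
rewrite /grid_adj /path_adj -!(inj_eq val_inj) /=.
move: (v.1 : nat) (v.2 : nat) (u.1 : nat) (u.2 : nat) => x y i j.
by repeat case: eqP => ? /=; lia.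
Qed.

Lemma nbrs_in_grid S v : nbrs_in (@grid_adj m n) S v =
  in_padded S v.1 v.2.+1 + in_padded S v.1.+2 v.2.+1
  + in_padded S v.1.+1 v.2 + in_padded S v.1.+1 v.2.+2.
Proof.
rewrite /nbrs_in -sum1dep_card big_mkcond /= -!sum_in_padded -!big_split /=.
apply: eq_bigr => u _; case: (u \in S) => //=.
by rewrite -grid_adj_split; case: grid_adj.
Qed.

Lemma row_ok_column S (v : 'I_m * 'I_n) :
  row_ok (column S v.2) (column S v.2.+1) (column S v.2.+2) v.1 =
  if v \in S then nbrs_in (@grid_adj m n) S v == 0
  else 0 < nbrs_in (@grid_adj m n) S v <= 2.
Proof.
case: v => i j.
by rewrite /row_ok /window_nbrs nbrs_in_grid above_column !nth_column in_padded_ord.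
Qed.

Lemma indep12_windows S : indep12 (@grid_adj m n) S =
  [forall j : 'I_n, window_ok m (column S j) (column S j.+1) (column S j.+2)].
Proof.
rewrite indep12E; apply/forallP/forallP => [h j | h [i j]].
  apply/allP => i; rewrite mem_iota => /andP [_ hi].
  by have := h (Ordinal hi, j); rewrite -row_ok_column.
by rewrite -row_ok_column; apply: (allP (h j)); rewrite mem_iota /=.
Qed.

Lemma card_columns S : #|S| = \sum_(j < n) weight (column S j.+1).
Proof.
under eq_bigr do rewrite weight_mkseq.
rewrite exchange_big -sum1_card big_mkcond pair_bigA /=.
by apply: eq_bigr => -[i j] _; rewrite in_padded_ord.
Qed.

Definition set_of_word (w : seq col) : {set 'I_m * 'I_n} :=
  [set u : 'I_m * 'I_n | nth false (nth (blank m) (pad m w) u.2.+1) u.1].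

Section SetOfWord.
Variable w : seq col.
Hypotheses (size_w : size w = n) (height_w : all (fun c => size c == m) w).

Lemma size_nth_pad c : size (nth (blank m) (pad m w) c) = m.
Proof.
case: (ltnP c (size (pad m w))) => hc; last by rewrite nth_default ?size_nseq.
have := mem_nth (blank m) hc; rewrite inE mem_cat inE.
by case/or3P=> [/eqP -> | /(allP height_w) /eqP | /eqP ->]; rewrite ?size_nseq.
Qed.

Lemma column_set_of_word c : column (set_of_word w) c = nth (blank m) (pad m w) c.
Proof.
apply: (@eq_from_nth _ false); rewrite ?size_mkseq ?size_nth_pad // => r hr.
rewrite nth_column; case: (boolP ((c == 0) || (n < c))) => hc.
  rewrite in_padded_out; last by move: hc; lia.
  suff -> : nth (blank m) (pad m w) c = blank m by rewrite nth_nseq if_same.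
  case/orP: hc => [/eqP -> // | hc].
  case: (ltnP c (size (pad m w))) => hc'; last by rewrite nth_default.
  have -> : c = n.+1 by move: hc hc'; rewrite /pad /= size_cat size_w /=; lia.
  by rewrite /= nth_cat size_w ltnn subnn.
have [j hj cE] : exists2 j, j < n & c = j.+1 by exists c.-1; move: hc; lia.
by rewrite cE (in_padded_ord _ (Ordinal hr) (Ordinal hj)) inE.
Qed.

Lemma indep12_set_of_word :
  windows_ok m (pad m w) -> indep12 (@grid_adj m n) (set_of_word w).
Proof.
move=> hw; rewrite indep12_windows; apply/forallP => j; rewrite !column_set_of_word.
by apply: windows_ok_nth; rewrite //= size_cat size_w addn1 !ltnS.
Qed.

Lemma card_set_of_word : #|set_of_word w| = \sum_(c <- w) weight c.
Proof.
rewrite card_columns (big_nth (blank m)) size_w big_mkord; apply: eq_bigr => j _.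
by rewrite column_set_of_word /= nth_cat size_w ltn_ord.
Qed.

End SetOfWord.

End GridColumns.

(** * Lower bound: a periodic transfer-matrix certificate *)

Section TransferBound.
Variables (T : Type) (admissible : pred T) (fits : T -> T -> T -> bool).
Variables (cost : T -> nat) (z : T) (bound : nat -> T * T -> option nat).
Hypothesis bound_start : forall c, admissible c -> bound 1 (z, c) = Some (cost c).
Hypothesis bound_step : forall k a b c v, 0 < k -> bound k (a, b) = Some v ->
  admissible c -> fits a b c -> exists2 v', bound k.+1 (b, c) = Some v' & v' <= v + cost c.

Lemma bound_le_word_cost (w : nat -> T) n :
  (forall i, admissible (w i)) -> w 0 = z -> 0 < n ->
  (forall i, 0 < i < n -> fits (w i.-1) (w i) (w i.+1)) ->
  exists2 v, bound n (w n.-1, w n) = Some v & v <= \sum_(i < n) cost (w i.+1).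
Proof.
move=> adm_w w0; elim: n => [|[|n] IH] // _ fits_w.
  by exists (cost (w 1)); rewrite ?big_ord1 //= w0 bound_start.
have [v bv le_v] := IH isT (fun i hi => fits_w i (ltac:(lia))).
have [v' bv' le_v'] := bound_step (ltn0Sn _) bv (adm_w n.+2) (fits_w n.+1 (ltac:(lia))).
by exists v' => //; rewrite big_ord_recr /= (leq_trans le_v') // leq_add2r.
Qed.

End TransferBound.

Definition col_of_code (k : nat) : col := mkseq (fun i => odd (k %/ 2 ^ i)) 6.

Definition all_cols : seq col := map col_of_code (iota 0 64).

Lemma mem_all_cols (c : col) : size c = 6 -> c \in all_cols.
Proof.
case: c => [|b0 [|b1 [|b2 [|b3 [|b4 [|b5 [|]]]]]]] //= _.
by case: b0; case: b1; case: b2; case: b3; case: b4; case: b5; vm_compute.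
Qed.

Definition table := seq (col * col * nat).

Definition lookup (t : table) (s : col * col) : option nat :=
  ohead [seq e.2 | e <- t & e.1 == s].

Fixpoint update_min (t : table) (s : col * col) (v : nat) : table :=
  if t is (s', v') :: t' then
    if s' == s then (s', minn v v') :: t' else (s', v') :: update_min t' s v
  else [:: (s, v)].

Definition dp_step (t : table) : table :=
  foldl (fun acc e => foldl (fun acc c =>
    if window_ok 6 e.1.1 e.1.2 c then update_min acc (e.1.2, c) (e.2 + weight c) else acc)
    acc all_cols) [::] t.

Definition dp_init : table := [seq ((blank 6, c), weight c) | c <- all_cols].

Definition dp (k : nat) : table := iter k.-1 dp_step dp_init.

(* [if] rather than [==>]: the VM evaluates both arguments of [implb], and the lookup is costly. *)
Definition transfers (t t' : table) (d : nat) : bool :=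
  all (fun e => all (fun c =>
    if window_ok 6 e.1.1 e.1.2 c then
      if lookup t' (e.1.2, c) is Some v' then v' + d <= e.2 + weight c else false
    else true) all_cols) t.

Definition closes_above (t : table) (lo : nat) : bool :=
  all (fun e => window_ok 6 e.1.1 e.1.2 (blank 6) ==> (lo <= e.2)) t.

Definition i12_grid6 (n : nat) : nat :=
  if ((n %% 7 == 0) || (n %% 7 == 3)) && (n != 7)
  then (10 * n + 17) %/ 7
  else (10 * n + 10) %/ 7.

(* [ts] lists the tables 1 to 16. *)
Definition certificate (ts : seq table) : bool :=
  let dp k := nth dp_init ts k.-1 in
  [&& all (fun k => transfers (dp k) (dp k.+1) 0) (iota 1 14),
      transfers (dp 15) (dp 9) 10,
      all (fun k => closes_above (dp k) (i12_grid6 k)) (iota 6 10) &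
      all (fun c => lookup (dp 1) (blank 6, c) == Some (weight c)) all_cols].

Lemma certificate_holds : certificate (traject dp_step dp_init 16).
Proof. by vm_compute. Qed.

Lemma dp_certified :
  [/\ forall k, 0 < k < 15 -> transfers (dp k) (dp k.+1) 0,
      transfers (dp 15) (dp 9) 10,
      forall k, 6 <= k < 16 -> closes_above (dp k) (i12_grid6 k) &
      forall c, c \in all_cols -> lookup (dp 1) (blank 6, c) = Some (weight c)].
Proof.
have dpE k : 0 < k < 17 -> nth dp_init (traject dp_step dp_init 16) k.-1 = dp k.
  by case: k => [|k] hk; rewrite nth_traject //; lia.
(* generalizing the tables keeps the kernel from evaluating the certificate again *)
move: (traject dp_step dp_init 16) dpE certificate_holds => ts dpE.
rewrite /certificate => /and4P [/allP h_step h_period /allP h_close /allP h_start].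
split=> [k hk | | k hk | c /h_start /eqP].
- have /h_step : k \in iota 1 14 by rewrite mem_iota; lia.
  by rewrite (dpE k) ?(dpE k.+1); [exact: id | lia | lia].
- by move: h_period; rewrite (dpE 15) ?(dpE 9); [exact: id | | ].
- have /h_close : k \in iota 6 10 by rewrite mem_iota; lia.
  by rewrite (dpE k); [exact: id | lia].
- by rewrite (dpE 1); [exact: id |].
Qed.

Lemma lookupP t s v : lookup t s = Some v -> (s, v) \in t.
Proof.
elim: t => [|[s' v'] t IH] //=; rewrite /lookup /=.
case: eqP => [-> [<-] | _ /IH]; first by rewrite mem_head.
by rewrite in_cons => ->; rewrite orbT.
Qed.

Lemma transfersP t t' d a b c v : transfers t t' d -> lookup t (a, b) = Some v ->
  c \in all_cols -> window_ok 6 a b c ->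
  exists2 v', lookup t' (b, c) = Some v' & v' + d <= v + weight c.
Proof.
move=> /allP ht /lookupP /ht /allP hv hc hab; move: (hv c hc); rewrite /= hab /=.
by case: lookup => // v' hv'; exists v'.
Qed.

Lemma closes_aboveP t lo a b v : closes_above t lo -> lookup t (a, b) = Some v ->
  window_ok 6 a b (blank 6) -> lo <= v.
Proof. by move=> /allP ht /lookupP /ht /= /implyP. Qed.

Definition fold_index (k : nat) : nat := if k < 9 then k else 9 + (k - 9) %% 7.

Lemma fold_index_succ k : 0 < k ->
  (0 < fold_index k < 15 /\ fold_index k.+1 = (fold_index k).+1 /\ (k.+1 - 9) %/ 7 = (k - 9) %/ 7)
  \/ (fold_index k = 15 /\ fold_index k.+1 = 9 /\ (k.+1 - 9) %/ 7 = ((k - 9) %/ 7).+1).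
Proof. by rewrite /fold_index; case: ifP; case: ifP; lia. Qed.

(* [(k - 9) %/ 7] counts the periods folded away; truncated subtraction makes it 0 for [k < 9]. *)
Definition dp_bound (k : nat) (s : col * col) : option nat :=
  omap (addn (10 * ((k - 9) %/ 7))) (lookup (dp (fold_index k)) s).

Lemma dp_bound_start c : size c == 6 -> dp_bound 1 (blank 6, c) = Some (weight c).
Proof.
case: dp_certified => _ _ _ h_start /eqP /mem_all_cols /h_start.
by rewrite /dp_bound /fold_index /= => ->.
Qed.

Lemma dp_bound_step k a b c v : 0 < k -> dp_bound k (a, b) = Some v ->
  size c == 6 -> window_ok 6 a b c ->
  exists2 v', dp_bound k.+1 (b, c) = Some v' & v' <= v + weight c.
Proof.
case: dp_certified => h_step h_period _ _ k_gt0.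
rewrite /dp_bound; case E: (lookup (dp (fold_index k)) (a, b)) => [u|]; last by [].
move=> [<-] /eqP /mem_all_cols hc hab.
case: (fold_index_succ k_gt0) => [[hr [-> ->]] | [hr [-> ->]]].
  have [v' -> le_v'] := transfersP (h_step _ hr) E hc hab.
  by exists (10 * ((k - 9) %/ 7) + v'); last lia.
rewrite hr in E; have [v' -> le_v'] := transfersP h_period E hc hab.
by exists (10 * ((k - 9) %/ 7).+1 + v'); last lia.
Qed.

Lemma i12_grid6_add7 n : 8 <= n -> i12_grid6 (n + 7) = i12_grid6 n + 10.
Proof.
move=> hn; rewrite /i12_grid6 modnDr.
have -> : (n + 7 != 7) by apply/eqP; lia.
have -> : (n != 7) by apply/eqP; lia.
by case: ifP => _; lia.
Qed.

Lemma i12_grid6_fold n : i12_grid6 n = i12_grid6 (fold_index n) + 10 * ((n - 9) %/ 7).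
Proof.
rewrite /fold_index; case: (ltnP n 9) => hn.
  by rewrite (_ : (n - 9) %/ 7 = 0) ?muln0 ?addn0 //; lia.
rewrite {1}(_ : n = 9 + (n - 9) %% 7 + 7 * ((n - 9) %/ 7)); last by lia.
elim: ((n - 9) %/ 7) => [|q IH]; first by rewrite !muln0 !addn0.
have -> : 9 + (n - 9) %% 7 + 7 * q.+1 = 9 + (n - 9) %% 7 + 7 * q + 7 by lia.
by rewrite i12_grid6_add7 ?IH; lia.
Qed.

Lemma dp_bound_closes n a b v : 6 <= n -> dp_bound n (a, b) = Some v ->
  window_ok 6 a b (blank 6) -> i12_grid6 n <= v.
Proof.
case: dp_certified => _ _ h_close _ hn.
rewrite /dp_bound; case E: (lookup (dp (fold_index n)) (a, b)) => [u|] // [<-] hab.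
have hr : 6 <= fold_index n < 16 by rewrite /fold_index; case: ifP; lia.
by rewrite i12_grid6_fold addnC leq_add2l (closes_aboveP (h_close _ hr) E hab).
Qed.

Lemma i12_grid6_le_card n (S : {set 'I_6 * 'I_n}) :
  6 <= n -> indep12 (@grid_adj 6 n) S -> i12_grid6 n <= #|S|.
Proof.
move=> hn; rewrite indep12_windows card_columns => /forallP win.
have fits_S i : 0 < i <= n -> window_ok 6 (column S i.-1) (column S i) (column S i.+1).
  by case: i => [|i] // /andP [_ hi]; exact: (win (Ordinal hi)).
have [||||v hv le_v] := @bound_le_word_cost _ _ _ _ _ _ dp_bound_start dp_bound_step (column S) n.
- by move=> i; rewrite size_mkseq.
- exact: column_out.
- exact: leq_trans hn.
- by move=> i /andP [i0 lt_in]; apply: fits_S; rewrite i0 ltnW.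
apply: leq_trans (dp_bound_closes hn hv _) le_v.
have := fits_S n; rewrite (@column_out 6 n S n.+1) ?ltnSn ?orbT //; apply; lia.
Qed.

(** * Upper bound: periodic words *)

Definition word_weight (w : seq col) : nat := sumn (map weight w).

Lemma word_weight_cat w1 w2 : word_weight (w1 ++ w2) = word_weight w1 + word_weight w2.
Proof. by rewrite /word_weight map_cat sumn_cat. Qed.

Definition good_word (n : nat) (w : seq col) : bool :=
  [&& windows_ok 6 (pad 6 w), size w == n, word_weight w == i12_grid6 n
    & all (fun c => size c == 6) w].

Lemma good_word_attains n w : good_word n w ->
  exists2 S : {set 'I_6 * 'I_n}, indep12 (@grid_adj 6 n) S & #|S| = i12_grid6 n.
Proof.
case/and4P=> win /eqP size_w /eqP weight_w height_w.
exists (set_of_word 6 n w); first exact: indep12_set_of_word.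
by rewrite card_set_of_word // -weight_w /word_weight sumnE big_map.
Qed.

(* Every base word and the period block pass through this pair of columns; they are spliced
   there. *)
Definition seam : seq col := [:: col_of_code 32; col_of_code 10].

Definition period_block : seq col :=
  map col_of_code [:: 32; 5; 16; 2; 40; 1; 20; 1; 40; 2; 16; 5].

Lemma period_block_ok :
  [&& windows_ok 6 (seam ++ period_block ++ seam), size period_block == 12,
      word_weight (period_block ++ seam) == 20
    & all (fun c => size c == 6) (period_block ++ seam)].
Proof. by vm_compute. Qed.

Lemma i12_grid6_add14 n : 8 <= n -> i12_grid6 (n + 14) = i12_grid6 n + 20.
Proof. by move=> hn; rewrite (addnA n 7 7) !i12_grid6_add7 ?addnA //; lia. Qed.

Lemma windows_ok_cat_seam p q :
  windows_ok 6 (p ++ seam ++ q) = windows_ok 6 (p ++ seam) && windows_ok 6 (seam ++ q).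
Proof. exact: windows_ok_cat. Qed.

Lemma good_word_pump n p q : 8 <= n -> good_word n (p ++ seam ++ q) ->
  good_word (n + 14) (p ++ seam ++ period_block ++ seam ++ q).
Proof.
case/and4P: period_block_ok => win_block /eqP size_block /eqP weight_block height_block hn.
have pad_windows r : windows_ok 6 (pad 6 (p ++ seam ++ r)) =
    windows_ok 6 ((blank 6 :: p) ++ seam) && windows_ok 6 (seam ++ r ++ [:: blank 6]).
  by rewrite -windows_ok_cat_seam /pad -!catA.
rewrite /good_word !pad_windows.
have -> : seam ++ (period_block ++ seam ++ q) ++ [:: blank 6] =
    (seam ++ period_block) ++ seam ++ q ++ [:: blank 6] by rewrite -!catA.
rewrite windows_ok_cat_seam -catA win_block andTb.
case/and4P=> /andP [win_p win_q] /eqP size_w /eqP weight_w height_w.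
rewrite word_weight_cat in weight_block.
apply/and4P; split.
- by rewrite win_p win_q.
- by move: size_w; rewrite !size_cat size_block (_ : size seam = 2) //; lia.
- by rewrite i12_grid6_add14 // -weight_w !word_weight_cat -weight_block; lia.
- by move: height_w height_block; rewrite !all_cat => /and3P [-> -> ->] /andP [-> _].
Qed.

Definition base_codes (b : nat) : seq nat * seq nat :=
  match b with
  | 8 => ([:: 20; 1; 40; 2; 16; 5], [::])
  | 9 => ([:: 18; 4; 33; 8; 34; 16; 5], [::])
  | 10 => ([:: 21], [:: 32; 5; 16; 2; 40; 1; 20])
  | 11 => ([:: 20; 1; 40; 2; 16; 5], [:: 33; 4; 18])
  | 12 => ([:: 20; 1; 40; 2; 16; 5], [:: 16; 5; 32; 10])
  | 13 => ([:: 9; 34; 16; 5], [:: 32; 5; 16; 2; 40; 1; 20])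
  | 14 => ([:: 21], [:: 32; 5; 16; 2; 40; 1; 20; 2; 40; 1; 20])
  | 15 => ([:: 20; 1; 40; 2; 16; 5], [:: 32; 5; 16; 2; 40; 1; 20])
  | 16 => ([:: 20; 1; 40; 2; 16; 5], [:: 32; 5; 16; 34; 8; 33; 4; 18])
  | 17 => ([:: 21], [:: 32; 5; 16; 2; 40; 1; 20; 1; 40; 2; 16; 5; 32; 10])
  | 18 => ([:: 20; 1; 40; 2; 16; 5], [:: 32; 5; 16; 2; 40; 1; 20; 33; 8; 34])
  | 19 => ([:: 20; 1; 40; 2; 16; 5], [:: 32; 5; 16; 2; 40; 1; 20; 2; 40; 1; 20])
  | 20 => ([:: 9; 34; 16; 5], [:: 32; 5; 16; 2; 40; 1; 20; 1; 40; 2; 16; 5; 32; 10])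
  | _ => ([:: 21], [:: 32; 5; 16; 2; 40; 1; 20; 2; 40; 1; 20; 1; 40; 2; 16; 5; 32; 10])
  end.

Definition short_word (n : nat) : seq col :=
  map col_of_code (if n == 6 then [:: 9; 34; 16; 5; 32; 10] else [:: 34; 8; 33; 4; 17; 8; 34]).

Lemma base_words_good :
  all (fun b => good_word b
         (map col_of_code (base_codes b).1 ++ seam ++ map col_of_code (base_codes b).2))
      (iota 8 14)
  && all (fun n => good_word n (short_word n)) [:: 6; 7].
Proof. by vm_compute. Qed.

Lemma exists_good_word n : 6 <= n -> exists w, good_word n w.
Proof.
case/andP: base_words_good => /allP seamed /allP short hn.
case: (ltnP n 8) => [lt_n8 | ge_n8].
  by exists (short_word n); apply: short; rewrite !inE; lia.
pose b := 8 + (n - 8) %% 14.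
have hb : b \in iota 8 14 by rewrite mem_iota /b; lia.
have -> : n = b + 14 * ((n - 8) %/ 14) by rewrite /b; lia.
suff [p [q hw]] : exists p q, good_word (b + 14 * ((n - 8) %/ 14)) (p ++ seam ++ q).
  by exists (p ++ seam ++ q).
elim: ((n - 8) %/ 14) => [|k [p [q hw]]].
  rewrite muln0 addn0; exists (map col_of_code (base_codes b).1).
  by exists (map col_of_code (base_codes b).2); apply: seamed.
exists p, (period_block ++ seam ++ q); rewrite mulnSr addnA.
by apply: good_word_pump hw; move: hb; rewrite mem_iota; lia.
Qed.

Theorem mainTheorem7 (n : nat) (hn : 6 <= n) :
  is_i12_number (@grid_adj 6 n)
    (if ((n %% 7 == 0) || (n %% 7 == 3)) && (n != 7)
     then (10 * n + 17) %/ 7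
     else (10 * n + 10) %/ 7).
Proof.
rewrite -/(i12_grid6 n); split; last by move=> S; apply: i12_grid6_le_card.
have [w /good_word_attains [S indep_S card_S]] := exists_good_word hn.
by exists S.
Qed.
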